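(* Let $\mathcal V$ be a finite set of variables ranging over $\mathbb{N}$ and let $\Sigma=\mathcal V\cup\{\underline{x} : x\in\mathcal V\}$ (a fresh underlined copy of each variable). Every equation of one of the forms $x=c$ (with $c\in\mathbb{N}$), $x+y=z$, or $x\cdot y=z$, where $x,y,z\in\mathcal V$ are pairwise distinct variables, is encoded by some language $L\subseteq\Sigma^*$ that is definable by a regulated $\mathsf{C\text{-}RASP}$ formula.
   Context: $\mathsf{C\text{-}RASP}$ formulas over a finite alphabet $\Sigma$: $\phi ::= \sigma \mid \Diamond^{-}\phi \mid \Box^{-}\phi \mid \neg\phi \mid \phi_1\wedge\phi_2 \mid \sum_{t\in\mathcal{T}}\alpha_t t\sim k$, terms $t ::= \#[\phi] \mid c$, with $\sigma\in\Sigma$, $\alpha_t,k,c\in\mathbb{Z}$, ${\sim}\in\{<,\le,=,\ge,>\}$. Semantics at position $i$ of $w=w_1\cdots w_n$: $w,i\models\sigma$ iff $w_i=\sigma$; Boolean connectives as usual; $w,i\models\Diamond^{-}\phi$ iff $w,j\models\phi$ for some $j<i$; $w,i\models\Box^{-}\phi$ iff $w,j\models\phi$ for all $j\le i$; $\#[\phi]$ evaluates to $|\{j\in[1,i]: w,j\models\phi\}|$, $c$ to $c$, and comparisons are integer comparisons. $w\models\phi$ iff $w,|w|\models\phi$; $\phi$ defines $L(\phi)=\{w: w\models\phi\}$. A formula is regulated if no atomic formula $\sigma$ ($\sigma\in\Sigma$) occurs outside the scope of a counting operator $\#$. For $w\in\Sigma^*$ and $\sigma\in\Sigma$, $|w|_\sigma$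 is the number of occurrences of $\sigma$ in $w$. A language $L\subseteq\Sigma^*$ encodes an equation $\mathcal D$ over variables $x_1,\dots,x_m\in\mathcal V\subseteq\Sigma$ if (i) for every $w\in L$, the assignment $x_i\mapsto|w|_{x_i}$ satisfies $\mathcal D$, and (ii) for all $n_1,\dots,n_m\in\mathbb N$ satisfying $\mathcal D$ there is $w\in L$ with $|w|_{x_i}=n_i$ for all $i\in[m]$. *)

From mathcomp Require Import all_boot all_order all_algebra.
Set Implicit Arguments. Unset Strict Implicit. Unset Printing Implicit Defensive.
Import Order.TTheory GRing.Theory Num.Theory.

Inductive cmp := CLt | CLe | CEq | CGe | CGt.

Inductive cform (S : Type) :=
  | FAtom : S -> cform S
  | FDiaM : cform S -> cform S
  | FBoxM : cform S -> cform S
  | FNeg  : cform S -> cform S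
  | FAnd  : cform S -> cform S -> cform S
  | FCmp  : ctsum S -> cmp -> int -> cform S
with ctsum (S : Type) :=
  | TNil  : ctsum S
  | TCons : int -> cterm S -> ctsum S -> ctsum S
with cterm (S : Type) :=
  | TCount : cform S -> cterm S
  | TConst : int -> cterm S.

Definition cmp_eval (c : cmp) (a b : int) : bool :=
  match c with
  | CLt => (a < b)%R | CLe => (a <= b)%R | CEq => a == b
  | CGe => (b <= a)%R | CGt => (b < a)%R
  end.

Section Semantics.
Variable S : eqType.
Variable w : seq S.

(** positions are 1..size w; letter at position i is nth (i-1). *)
Definition letter_at (i : nat) : option S := nth None (map Some w) i.-1.

Fixpoint sat (i : nat) (f : cform S) {struct f} : bool :=
  match f with
  | FAtom s => (0 < i)%N && (letter_at i == Some s)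
  | FDiaM g => has (fun j => sat j g) (iota 1 i.-1)
  | FBoxM g => all (fun j => sat j g) (iota 1 i)
  | FNeg g => ~~ sat i g
  | FAnd g h => sat i g && sat i h
  | FCmp ts c k => cmp_eval c (tsum_eval i ts) k
  end
with tsum_eval (i : nat) (ts : ctsum S) {struct ts} : int :=
  match ts with
  | TNil => 0%R
  | TCons a t rest => (a * term_eval i t + tsum_eval i rest)%R
  end
with term_eval (i : nat) (t : cterm S) {struct t} : int :=
  match t with
  | TCount g => (count (fun j => sat j g) (iota 1 i))%:Z
  | TConst c => c
  end.

End Semantics.

Definition lang (S : eqType) (f : cform S) : seq S -> Prop :=
  fun w => sat w (size w) f.

Fixpoint regulated (S : Type) (f : cform S) : bool :=
  match f with
  | FAtom _ => false
  | FDiaM g => regulated g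
  | FBoxM g => regulated g
  | FNeg g => regulated g
  | FAnd g h => regulated g && regulated h
  | FCmp _ _ _ => true
  end.

Inductive nequation (V : Type) :=
  | EqConst : V -> nat -> nequation V
  | EqAdd : V -> V -> V -> nequation V
  | EqMul : V -> V -> V -> nequation V.

Definition eqn_sat (V : Type) (a : V -> nat) (D : nequation V) : Prop :=
  match D with
  | EqConst x c => a x = c
  | EqAdd x y z => a x + a y = a z
  | EqMul x y z => a x * a y = a z
  end.

Definition eqn_vars (V : Type) (D : nequation V) : seq V :=
  match D with
  | EqConst x _ => [:: x]
  | EqAdd x y z => [:: x; y; z]
  | EqMul x y z => [:: x; y; z]
  end.

Definition eqn_wf (V : eqType) (D : nequation V) : bool := uniq (eqn_vars D).

(** Alphabet Sigma = V (inl) together with underlined copies (inr). *)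
Definition Alph (V : finType) : finType := (V + V)%type.

Definition encodes (V : finType) (L : seq (Alph V) -> Prop) (D : nequation V) : Prop :=
  (forall w, L w -> eqn_sat (fun x => count_mem (inl x : Alph V) w) D) /\
  (forall n : V -> nat, eqn_sat n D ->
     exists2 w, L w & forall x, x \in eqn_vars D -> count_mem (inl x : Alph V) w = n x).

From mathcomp Require Import all_boot all_order all_algebra zify.
Set Implicit Arguments. Unset Strict Implicit. Unset Printing Implicit Defensive.
Import GRing.Theory.

(* x = c and x + y = z are single linear constraints on letter counts.  For x * y = z, with
   R and Q the underlined copies of z and y, take the words x^a (y z^a R Q^a)^k: a check at
   every position, selected by its letter and looking only at the counts so far, forces each
   block of z's to have length #x, so that finally #z = #x * #y. *)

Notation accepts f w := (sat w (size w) f).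

Scheme cform_ind_mut := Induction for cform Sort Prop
with ctsum_ind_mut := Induction for ctsum Sort Prop
with cterm_ind_mut := Induction for cterm Sort Prop.
Combined Scheme cform_mutind from cform_ind_mut, ctsum_ind_mut, cterm_ind_mut.

Lemma count_rcons (T : Type) (a : pred T) s x : count a (rcons s x) = count a s + a x.
Proof. by rewrite -cats1 count_cat /= addn0. Qed.

Section PastDetermined.
Variables (S : eqType) (s : seq S) (c : S).

Lemma sat_rcons_mut :
  (forall f i, i <= size s -> sat (rcons s c) i f = sat s i f) /\
  (forall ts i, i <= size s -> tsum_eval (rcons s c) i ts = tsum_eval s i ts) /\
  (forall t i, i <= size s -> term_eval (rcons s c) i t = term_eval s i t).
Proof.
have in_iota i j : i <= size s -> j \in iota 1 i -> j <= size s.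
  by rewrite mem_iota add1n ltnS => le_is /andP[_ /leq_trans->].
apply: (@cform_mutind S (fun f => forall i, i <= size s -> sat (rcons s c) i f = sat s i f)
  (fun ts => forall i, i <= size s -> tsum_eval (rcons s c) i ts = tsum_eval s i ts)
  (fun t => forall i, i <= size s -> term_eval (rcons s c) i t = term_eval s i t)) => /=.
- move=> u [|i] //= le_is.
  by rewrite /letter_at /= map_rcons nth_rcons size_map le_is.
- move=> g IHg i le_is; have le_i1s := leq_trans (leq_pred i) le_is.
  by apply: eq_in_has => j /(in_iota _ _ le_i1s)/IHg.
- by move=> g IHg i le_is; apply: eq_in_all => j /(in_iota _ _ le_is)/IHg.
- by move=> g IHg i /IHg->.
- by move=> g IHg h IHh i le_is; rewrite IHg ?IHh.
- by move=> ts IHts k n i /IHts->.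
- by [].
- by move=> a t IHt ts IHts i le_is; rewrite IHt ?IHts.
- move=> g IHg i le_is; congr (Posz _).
  by apply: eq_in_count => j /(in_iota _ _ le_is)/IHg.
- by [].
Qed.

Lemma sat_rcons f i : i <= size s -> sat (rcons s c) i f = sat s i f.
Proof. by move=> le_is; case: sat_rcons_mut => ->. Qed.

End PastDetermined.

Section Counting.
Variable S : eqType.
Implicit Types (f g : cform S) (s w : seq S) (c u : S).

Definition count_sat g w : nat := count (fun j => sat w j g) (iota 1 (size w)).

Lemma accepts_and f g w : accepts (FAnd f g) w = accepts f w && accepts g w.
Proof. by []. Qed.

Lemma accepts_atom_rcons u s c : accepts (FAtom u) (rcons s c) = (c == u).
Proof.
by rewrite /= size_rcons /letter_at /= map_rcons nth_rcons size_map ltnn eqxx.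
Qed.

Lemma count_sat_rcons g s c :
  count_sat g (rcons s c) = count_sat g s + accepts g (rcons s c).
Proof.
rewrite /count_sat [in iota _ _]size_rcons -[(size s).+1]addn1 iotaD count_cat /=.
rewrite add1n addn0 size_rcons; congr (_ + _).
by apply: eq_in_count => j; rewrite mem_iota add1n ltnS => /andP[_ /sat_rcons->].
Qed.

Lemma count_sat_atom u w : count_sat (FAtom u) w = count_mem u w.
Proof.
elim/last_ind: w => [|s c IHs] //.
by rewrite count_sat_rcons IHs accepts_atom_rcons count_rcons.
Qed.

Fixpoint count_sum (a : int) (us : seq S) (rest : ctsum S) : ctsum S :=
  if us is u :: us' then TCons a (TCount (FAtom u)) (count_sum a us' rest) else rest.

Lemma tsum_eval_count_sum a us rest w :
  tsum_eval w (size w) (count_sum a us rest) =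
  (a * Posz (sumn [seq count_mem u w | u <- us]) + tsum_eval w (size w) rest)%R.
Proof.
elim: us => [|u us IHus] /=; first by rewrite mulr0 add0r.
by rewrite IHus -[count _ _]/(count_sat (FAtom u) w) count_sat_atom PoszD mulrDr addrA.
Qed.

Definition count_eq (us vs : seq S) (k : nat) : cform S :=
  FCmp (count_sum 1 us (count_sum (-1) vs (TNil S))) CEq (Posz k).

Lemma accepts_count_eq us vs k w :
  accepts (count_eq us vs k) w =
  (sumn [seq count_mem u w | u <- us] == sumn [seq count_mem v w | v <- vs] + k).
Proof. by rewrite /= !tsum_eval_count_sum /=; apply/eqP/eqP; lia. Qed.

(* Box^- f would leave the atoms of f outside every count;
   #[~ f] = 0 keeps the formula regulated. *)
Definition always f : cform S := FCmp (TCons 1 (TCount (FNeg f)) (TNil S)) CEq 0.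

Lemma accepts_always_rcons f s c :
  accepts (always f) (rcons s c) = accepts (always f) s && accepts f (rcons s c).
Proof.
have always_count w : accepts (always f) w = (count_sat (FNeg f) w == 0).
  by rewrite /= mul1r addr0.
by rewrite !always_count count_sat_rcons addn_eq0 /=; case: sat.
Qed.

Lemma accepts_always_cat_nseq f s c n :
  accepts (always f) s ->
  (forall i, i < n -> accepts f (rcons (s ++ nseq i c) c)) ->
  accepts (always f) (s ++ nseq n c).
Proof.
elim: n => [|n IHn] acc_s acc_f; first by rewrite cats0.
have acc_n : accepts (always f) (s ++ nseq n c).
  by apply: IHn => // i /ltnW; apply: acc_f.
by rewrite -addn1 nseqD catA cats1 accepts_always_rcons acc_n acc_f.
Qed.

Definition guard u f : cform S := FNeg (FAnd (FAtom u) (FNeg f)).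

Lemma accepts_guard_rcons u f s c :
  accepts (guard u f) (rcons s c) = (c == u) ==> accepts f (rcons s c).
Proof.
by move: (accepts_atom_rcons u s c); rewrite /= => ->; rewrite negb_and negbK implybE.
Qed.

End Counting.

Section AlphabetEquality.
Variable V : finType.
Implicit Types a b : V.

Lemma eq_inl a b : (inl a == inl b :> Alph V) = (a == b). Proof. by []. Qed.
Lemma eq_inr a b : (inr a == inr b :> Alph V) = (a == b). Proof. by []. Qed.
Lemma eq_inl_inr a b : (inl a == inr b :> Alph V) = false. Proof. by []. Qed.
Lemma eq_inr_inl a b : (inr a == inl b :> Alph V) = false. Proof. by []. Qed.

End AlphabetEquality.

Definition Alph_eqE := (eq_inl, eq_inr, eq_inl_inr, eq_inr_inl).

Definition unary_word (V : finType) (n : V -> nat) (xs : seq V) : seq (Alph V) :=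
  flatten [seq nseq (n v) (inl v) | v <- xs].

Lemma count_unary_word (V : finType) (n : V -> nat) xs v :
  uniq xs -> v \in xs -> count_mem (inl v : Alph V) (unary_word n xs) = n v.
Proof.
move=> xs_uniq v_xs; rewrite /unary_word count_flatten -map_comp.
have -> : sumn [seq count_mem (inl v : Alph V) (nseq (n u) (inl u)) | u <- xs] =
           count_mem v xs * n v.
  elim: xs {xs_uniq v_xs} => //= u xs ->; rewrite count_nseq /= eq_inl mulnDl.
  by case: eqP => [->|].
by rewrite count_uniq_mem // v_xs mul1n.
Qed.

Lemma const_encodes (V : finType) (x : V) c :
  encodes (lang (count_eq [:: inl x] [::] c)) (EqConst x c).
Proof.
split=> [w | n /= nx]; first by rewrite /lang accepts_count_eq /= addn0 => /eqP.
exists (unary_word n [:: x]).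
  by rewrite /lang accepts_count_eq /= count_unary_word ?mem_head // addn0 nx.
by move=> u; rewrite inE => /eqP->; rewrite count_unary_word ?mem_head.
Qed.

Lemma add_encodes (V : finType) (x y z : V) :
  uniq [:: x; y; z] ->
  encodes (lang (count_eq [:: inl x; inl y] [:: inl z] 0)) (EqAdd x y z).
Proof.
move=> xyz_uniq; split=> [w | n /= nxyz].
  by rewrite /lang accepts_count_eq /= !addn0 => /eqP.
exists (unary_word n [:: x; y; z]); last first.
  by move=> u u_xyz; rewrite count_unary_word.
by rewrite /lang accepts_count_eq /= !count_unary_word ?inE ?eqxx ?orbT // !addn0 nxyz.
Qed.

Section Multiplication.
Variables (V : finType) (x y z : V).
Hypothesis xyz_uniq : uniq [:: x; y; z].

Local Notation X := (inl x : Alph V).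
Local Notation Y := (inl y : Alph V).
Local Notation Z := (inl z : Alph V).
Local Notation R := (inr z : Alph V).
Local Notation Q := (inr y : Alph V).

(* Accepted words look like x^a (y z^a R Q^a)^k.  The Q's of a block replay its z's, so when
   R closes the next block, #Z = #Q + #X says that this block has exactly a = #X letters z. *)
Definition mul_step : cform (Alph V) :=
  FAnd (guard X (count_eq [:: Y] [::] 0))
 (FAnd (guard Y (FAnd (count_eq [:: Z] [:: Q] 0) (count_eq [:: Y] [:: R] 1)))
 (FAnd (guard Z (count_eq [:: Y] [:: R] 1))
 (FAnd (guard R (FAnd (count_eq [:: Z] [:: Q; X] 0) (count_eq [:: R] [:: Y] 0)))
       (guard Q (count_eq [:: R] [:: Y] 0))))).

Definition mul_formula : cform (Alph V) :=
  FAnd (always mul_step) (FAnd (count_eq [:: Z] [:: Q] 0) (count_eq [:: R] [:: Y] 0)).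

Fact xyz_neq : ((x == y) = false) * ((y == x) = false) * ((x == z) = false) *
  ((z == x) = false) * ((y == z) = false) * ((z == y) = false).
Proof.
move: xyz_uniq; rewrite /= !inE negb_or andbT.
move=> /andP[/andP[/negbTE xy /negbTE xz] /negbTE yz].
by rewrite ![y == x]eq_sym ![z == x]eq_sym ![z == y]eq_sym xy xz yz.
Qed.

Lemma mul_letters_uniq : uniq [:: X; Y; Z; R; Q].
Proof. by rewrite /= !inE !Alph_eqE !xyz_neq. Qed.

Lemma eq_mul_letters_le1 c : (c == X) + (c == Y) + (c == Z) + (c == R) + (c == Q) <= 1.
Proof.
have := count_uniq_mem c mul_letters_uniq; rewrite /= addn0 !addnA !(eq_sym c) => ->.
exact: leq_b1.
Qed.

Lemma accepts_mul_step_rcons s c :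
  accepts mul_step (rcons s c) =
  let n u := count_mem u (rcons s c) in
  [&& (c == X) ==> (n Y == 0),
      (c == Y) ==> (n Z == n Q) && (n Y == n R + 1),
      (c == Z) ==> (n Y == n R + 1),
      (c == R) ==> (n Z == n Q + n X) && (n R == n Y)
    & (c == Q) ==> (n R == n Y)].
Proof.
rewrite /mul_step !accepts_and !accepts_guard_rcons !accepts_and !accepts_count_eq /=.
by rewrite !addn0.
Qed.

(* Either between two blocks, or inside a block before its R. *)
Definition mul_invariant (w : seq (Alph V)) : Prop :=
  (count_mem R w = count_mem Y w /\ count_mem Z w = count_mem X w * count_mem Y w) \/
  ((count_mem R w).+1 = count_mem Y w /\ count_mem Q w = count_mem X w * count_mem R w).

Lemma mul_invariant_rcons s c :
  mul_invariant s -> accepts mul_step (rcons s c) -> mul_invariant (rcons s c).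
Proof.
rewrite /mul_invariant accepts_mul_step_rcons /= !count_rcons /=.
have := eq_mul_letters_le1 c.
move: (c == X) (c == Y) (c == Z) (c == R) (c == Q).
move: (count_mem X s) (count_mem Y s) (count_mem Z s) (count_mem R s) (count_mem Q s).
by move=> cx cy cz cr cq [] [] [] [] [] //=; lia.
Qed.

Lemma mul_formula_sound w :
  accepts mul_formula w -> count_mem Z w = count_mem X w * count_mem Y w.
Proof.
rewrite !accepts_and !accepts_count_eq => /and3P[always_w].
rewrite /= !addn0 => /eqP eZQ /eqP eRY.
have: mul_invariant w.
  elim/last_ind: w always_w {eZQ eRY} => [|s c IHs]; first by left.
  by rewrite accepts_always_rcons => /andP[/IHs]; apply: mul_invariant_rcons.
by case=> [[_ ->] // | [+ _]]; rewrite eRY => /esym/n_Sn.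
Qed.

Definition mul_block (a : nat) : seq (Alph V) := Y :: nseq a Z ++ R :: nseq a Q.

Definition mul_word (a k : nat) : seq (Alph V) := nseq a X ++ flatten (nseq k (mul_block a)).

Lemma count_mul_word a k :
  let w := mul_word a k in
  [/\ count_mem X w = a, count_mem Y w = k, count_mem Z w = a * k,
      count_mem R w = k & count_mem Q w = a * k].
Proof.
rewrite /mul_word !count_cat !count_flatten !map_nseq !sumn_nseq /= !count_cat /= !count_nseq.
by rewrite /= !Alph_eqE !xyz_neq !eqxx; split; lia.
Qed.

Local Ltac check_mul_step counts :=
  rewrite accepts_mul_step_rcons /= !(count_rcons, count_cat, count_nseq) /=;
  rewrite !Alph_eqE !xyz_neq !eqxx ?counts; lia.

Lemma accepts_always_mul_block s a k :
  accepts (always mul_step) s ->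
  count_mem X s = a -> count_mem Y s = k -> count_mem Z s = a * k ->
  count_mem R s = k -> count_mem Q s = a * k ->
  accepts (always mul_step) (s ++ mul_block a).
Proof.
move=> always_s cX cY cZ cR cQ.
have -> : s ++ mul_block a = rcons (rcons s Y ++ nseq a Z) R ++ nseq a Q.
  by rewrite /mul_block -!cats1 -!catA.
have counts := (cX, cY, cZ, cR, cQ).
apply: accepts_always_cat_nseq => [|i _]; last by check_mul_step counts.
rewrite accepts_always_rcons; apply/andP; split; last by check_mul_step counts.
apply: accepts_always_cat_nseq => [|i _]; last by check_mul_step counts.
by rewrite accepts_always_rcons always_s; check_mul_step counts.
Qed.

Lemma accepts_always_mul_word a k : accepts (always mul_step) (mul_word a k).
Proof.
elim: k => [|k IHk].
  rewrite /mul_word cats0 -[nseq a X]cat0s.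
  apply: accepts_always_cat_nseq => // i _.
  by rewrite accepts_mul_step_rcons /= !count_rcons !count_nseq /= !Alph_eqE !xyz_neq; lia.
have [cX cY cZ cR cQ] := count_mul_word a k.
have -> : mul_word a k.+1 = mul_word a k ++ mul_block a.
  by rewrite /mul_word -addn1 nseqD flatten_cat /= cats0 catA.
exact: accepts_always_mul_block IHk cX cY cZ cR cQ.
Qed.

Lemma mul_encodes : encodes (lang mul_formula) (EqMul x y z).
Proof.
split=> [w /mul_formula_sound /esym // | n /= nxy].
have [cX cY cZ cR cQ] := count_mul_word (n x) (n y).
exists (mul_word (n x) (n y)).
  rewrite /lang !accepts_and accepts_always_mul_word !accepts_count_eq /=.
  by rewrite !addn0 cZ cQ cR cY !eqxx.
by move=> u; rewrite !inE => /or3P[] /eqP->; rewrite ?cX ?cY ?cZ.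
Qed.

End Multiplication.

Theorem lemma3p4 (V : finType) (D : nequation V) :
  eqn_wf D ->
  exists f : cform (Alph V), regulated f /\ encodes (lang f) D.
Proof.
case: D => [x c | x y z | x y z] /= wf.
- by exists (count_eq [:: inl x] [::] c); split; last exact: const_encodes.
- by exists (count_eq [:: inl x; inl y] [:: inl z] 0); split; last exact: add_encodes.
- by exists (mul_formula x y z); split; last exact: mul_encodes.
Qed.
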